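(* Let $d\ge 1$, $T\ge 1$, let $\mathcal{X}\subseteq\mathbb{R}^d$ be a non-empty closed convex set containing $\mathbf{0}$, and let $0<\mu\le L$. Let $f_1,\dots,f_T:\mathcal{X}\to[0,\infty)$ be differentiable with $\frac{\mu}{2}\|y-x\|^2\le f_t(y)-f_t(x)-\langle\nabla f_t(x),y-x\rangle\le\frac{L}{2}\|y-x\|^2$ for all $t$ and $x,y\in\mathcal{X}$. With starting point $x_0=\mathbf{0}$, let $$C_{\mathsf{OPT}}=\min_{(x_1,\dots,x_T)\in\mathcal{X}^T}\sum_{t=1}^T\Big(f_t(x_t)+\frac12\|x_t-x_{t-1}\|^2\Big).$$ Then $$C_{\mathsf{OPT}}\ge\sum_{t=1}^T f_t(x_t^\star)+\frac{\mu}{2(\mu+4)}\big(\mathcal{P}_{2,T}^\star+\|x_1^\star\|^2\big).$$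
   Context: $x_t^\star=\arg\min_{x\in\mathcal{X}}f_t(x)$ and $\mathcal{P}_{2,T}^\star=\sum_{t=2}^T\|x_t^\star-x_{t-1}^\star\|^2$. *)

From HB Require Import structures.
From mathcomp Require Import all_boot all_order all_algebra.
From mathcomp Require Import all_classical all_reals all_analysis.
Set Implicit Arguments. Unset Strict Implicit. Unset Printing Implicit Defensive.
Import Order.TTheory GRing.Theory Num.Theory.
Import numFieldNormedType.Exports.
Local Open Scope ring_scope.
Local Open Scope classical_set_scope.

(* Euclidean inner product and squared Euclidean norm on R^d
   (the library norm on 'rV is the sup norm, so we define these explicitly). *)
Definition dotv {R : comRingType} {d : nat} (u v : 'rV[R]_d) : R :=
  \sum_(i < d) u 0 i * v 0 i.
Definition sqnorm {R : comRingType} {d : nat} (u : 'rV[R]_d) : R := dotv u u.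

Definition convex_subset {R : realType} {d : nat} (X : set 'rV[R]_d) : Prop :=
  forall (x y : 'rV[R]_d) (l : R), X x -> X y -> 0 <= l <= 1 ->
    X (l *: x + (1 - l) *: y).

(* Strong convexity and minimality give quadratic growth,
   f_t x - f_t x*_t >= mu/2 |x - x*_t|^2 for every feasible x.  Start the comparator at
   x*_0 = 0 and put e_t = x_t - x*_t, so that e_0 = 0 and
   x*_t - x*_{t-1} = (x_t - x_{t-1}) - e_t + e_{t-1}.  A weighted Cauchy-Schwarz
   bound charges mu/(2(mu+4)) |x*_t - x*_{t-1}|^2 to
   1/2 |x_t - x_{t-1}|^2 + mu/4 (|e_t|^2 + |e_{t-1}|^2).  Half of the growth at
   step t pays for mu/4 |e_t|^2; the other half is kept as a potential that pays
   for the e_{t-1} term of step t+1, and these potentials telescope. *)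

From HB Require Import structures.
From mathcomp Require Import all_boot all_order all_algebra.
From mathcomp Require Import all_classical all_reals all_analysis.
From mathcomp Require Import ring lra.

Set Implicit Arguments.
Unset Strict Implicit.
Unset Printing Implicit Defensive.
Import Order.TTheory GRing.Theory Num.Theory.
Import numFieldNormedType.Exports.
Local Open Scope ring_scope.
Local Open Scope classical_set_scope.

Section SquaredNorm.
Variables (R : comNzRingType) (d : nat).
Implicit Types (u : 'rV[R]_d).

Lemma sqnorm0 : sqnorm (0 : 'rV[R]_d) = 0.
Proof. by apply: big1 => i _; rewrite mxE mul0r. Qed.

Lemma sqnormZ (k : R) u : sqnorm (k *: u) = k ^+ 2 * sqnorm u.
Proof. by rewrite /sqnorm /dotv mulr_sumr; apply: eq_bigr => i _; rewrite !mxE; ring. Qed.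

Lemma sqnormN u : sqnorm (- u) = sqnorm u.
Proof. by rewrite -scaleN1r sqnormZ sqrrN expr1n mul1r. Qed.

End SquaredNorm.

Lemma sqnorm_ge0 (R : realDomainType) d (u : 'rV[R]_d) : 0 <= sqnorm u.
Proof. by apply: sumr_ge0 => i _; rewrite -expr2 sqr_ge0. Qed.

(* Weighted Cauchy-Schwarz with weights 1/2, m/4, m/4: the reciprocals sum to 2 + 8/m = 2(m+4)/m. *)
Lemma sqr_sum3_le (R : realFieldType) (m a b e : R) : 0 < m ->
  m / (2 * (m + 4)) * (a + b + e) ^+ 2 <= 1 / 2 * a ^+ 2 + m / 4 * (b ^+ 2 + e ^+ 2).
Proof.
move=> m0; rewrite -subr_ge0.
have -> : 1 / 2 * a ^+ 2 + m / 4 * (b ^+ 2 + e ^+ 2) - m / (2 * (m + 4)) * (a + b + e) ^+ 2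
  = ((2 * a - m * b) ^+ 2 + (2 * a - m * e) ^+ 2 + 2 * m * (b - e) ^+ 2) / (4 * (m + 4)).
  by field; lra.
apply: divr_ge0; last lra.
by rewrite !addr_ge0 ?sqr_ge0 // mulr_ge0 ?sqr_ge0 //; lra.
Qed.

Lemma sqnorm_sum3_le (R : realFieldType) d (m : R) (a b e : 'rV[R]_d) : 0 < m ->
  m / (2 * (m + 4)) * sqnorm (a + b + e)
  <= 1 / 2 * sqnorm a + m / 4 * (sqnorm b + sqnorm e).
Proof.
move=> m0; rewrite /sqnorm /dotv !mulr_sumr -big_split mulr_sumr -big_split /=.
by apply: ler_sum => i _; rewrite !mxE -!expr2 sqr_sum3_le.
Qed.

Lemma ler_from_onemM (R : realFieldType) (K F : R) :
  (forall l, 0 < l <= 1 -> (1 - l) * K <= F) -> K <= F.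
Proof.
move=> hF; have F0 : 0 <= F by have := hF 1; rewrite subrr mul0r; apply; lra.
rewrite leNgt; apply/negP => FK; have K0 : 0 < K by apply: le_lt_trans FK.
have := hF ((K - F) / (2 * K)).
have -> : (1 - (K - F) / (2 * K)) * K = (K + F) / 2 by field; lra.
suff /[swap]/[apply] : 0 < (K - F) / (2 * K) <= 1 by lra.
by rewrite divr_gt0 ?ler_pdivrMr ?mul1r; lra.
Qed.

Section StrongConvexity.
Variables (R : realType) (d : nat) (X : set 'rV[R]_d) (mu : R) (g : 'rV[R]_d -> R).
Hypothesis hXconv : convex_subset X.
Hypothesis hsc : forall x y, X x -> X y ->
  mu / 2 * sqnorm (y - x) <= g y - g x - 'd g x (y - x).

Lemma strongly_convex_combination x y l : X x -> X y -> 0 <= l <= 1 ->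
  g (l *: x + (1 - l) *: y) + mu / 2 * (l * (1 - l)) * sqnorm (x - y)
  <= l * g x + (1 - l) * g y.
Proof.
move=> Xx Xy /andP[l0 l1]; set z := l *: x + (1 - l) *: y.
have Xz : X z by apply: hXconv => //; rewrite l0.
have zx : x - z = (1 - l) *: (x - y) by apply/matrixP => i j; rewrite !mxE; ring.
have zy : y - z = (- l) *: (x - y) by apply/matrixP => i j; rewrite !mxE; ring.
have := hsc Xz Xx; rewrite zx linearZ sqnormZ /= => hx.
have := hsc Xz Xy; rewrite zy linearZ sqnormZ /= => hy.
have l1' : 0 <= 1 - l by lra.
have := ler_wpM2l l0 hx; have := ler_wpM2l l1' hy.
set D := 'd g z (x - y).
rewrite -[(1 - l) *: D]/((1 - l) * D) -[- l *: D]/(- l * D).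
nra.
Qed.

(* No first-order optimality condition is needed: compare g xs with g on the
   segment [xs, x] and let the point slide to xs. *)
Lemma quadratic_growth_at_min xs x : X xs -> (forall z, X z -> g xs <= g z) -> X x ->
  mu / 2 * sqnorm (x - xs) <= g x - g xs.
Proof.
move=> Xxs hmin Xx; apply: ler_from_onemM => l /andP[l0 l1].
have Xz : X (l *: x + (1 - l) *: xs) by apply: hXconv => //; rewrite ltW.
have l01 : 0 <= l <= 1 by rewrite ltW.
rewrite -(ler_pM2l l0).
have := strongly_convex_combination Xx Xxs l01; have := hmin _ Xz.
lra.
Qed.

End StrongConvexity.

Definition from_origin {V : nmodType} (z : nat -> V) (t : nat) : V :=
  if t is 0%N then 0 else z t.

Lemma sum_sqnorm_from_origin (R : comNzRingType) d (z : nat -> 'rV[R]_d) T : (0 < T)%N ->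
  \sum_(2 <= t < T.+1) sqnorm (z t - z t.-1) + sqnorm (z 1%N)
  = \sum_(1 <= t < T.+1) sqnorm (from_origin z t - from_origin z t.-1).
Proof.
move=> T0; rewrite (@big_ltn _ _ _ 1) //= subr0 addrC; congr (_ + _).
by apply: eq_big_nat => -[|[|t]].
Qed.

Lemma amortized_step_le (R : realFieldType) d (mu g_x g_xs : R) (x x' xs ys' : 'rV[R]_d) :
  0 < mu -> mu / 2 * sqnorm (x - xs) <= g_x - g_xs ->
  g_xs + mu / (2 * (mu + 4)) * sqnorm (xs - ys')
  <= g_x + 1 / 2 * sqnorm (x - x') + (mu / 4 * sqnorm (x' - ys') - mu / 4 * sqnorm (x - xs)).
Proof.
move=> mu0 growth.
have -> : xs - ys' = (x - x') - (x - xs) + (x' - ys')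
  by apply/matrixP => i j; rewrite !mxE; ring.
have := sqnorm_sum3_le (x - x') (- (x - xs)) (x' - ys') mu0; rewrite sqnormN.
lra.
Qed.

Theorem lemma5 (R : realType) (d T : nat) (hd : (1 <= d)%N) (hT : (1 <= T)%N)
  (X : set 'rV[R]_d) (hX0 : X 0) (hXclosed : closed X) (hXconv : convex_subset X)
  (mu L : R) (hmu : 0 < mu) (hmuL : mu <= L)
  (f : nat -> 'rV[R]_d -> R)
  (hfnn : forall t x, (1 <= t <= T)%N -> X x -> 0 <= f t x)
  (hfdiff : forall t x, (1 <= t <= T)%N -> X x -> differentiable (f t) x)
  (hfsc : forall t x y, (1 <= t <= T)%N -> X x -> X y ->
     mu / 2 * sqnorm (y - x) <= f t y - f t x - 'd (f t) x (y - x))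
  (hfsm : forall t x y, (1 <= t <= T)%N -> X x -> X y ->
     f t y - f t x - 'd (f t) x (y - x) <= L / 2 * sqnorm (y - x))
  (xstar : nat -> 'rV[R]_d)
  (hxstar : forall t, (1 <= t <= T)%N ->
     X (xstar t) /\ (forall x, X x -> f t (xstar t) <= f t x))
  (x : nat -> 'rV[R]_d) (hx0 : x 0%N = 0)
  (hx : forall t, (1 <= t <= T)%N -> X (x t)) :
  \sum_(1 <= t < T.+1) f t (xstar t)
    + mu / (2 * (mu + 4)) *
        (\sum_(2 <= t < T.+1) sqnorm (xstar t - xstar t.-1) + sqnorm (xstar 1%N))
  <= \sum_(1 <= t < T.+1) (f t (x t) + 1 / 2 * sqnorm (x t - x t.-1)).
Proof.
pose y := from_origin xstar.
pose Phi t := mu / 4 * sqnorm (x t - y t).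
rewrite sum_sqnorm_from_origin // mulr_sumr -big_split /=.
have step t : (1 <= t < T.+1)%N ->
    f t (xstar t) + mu / (2 * (mu + 4)) * sqnorm (y t - y t.-1)
    <= f t (x t) + 1 / 2 * sqnorm (x t - x t.-1) + (Phi t.-1 - Phi t).
  move=> /andP[t1 tT]; have htT : (1 <= t <= T)%N by rewrite t1.
  have [Xxs hmin] := hxstar t htT.
  rewrite /Phi (_ : y t = xstar t); last by case: t t1 {tT htT Xxs hmin}.
  apply: amortized_step_le => //.
  exact: (quadratic_growth_at_min hXconv (fun a b => hfsc t a b htT) Xxs hmin (hx t htT)).
apply: (le_trans (ler_sum_nat step)); rewrite big_split /= gerDl.
rewrite (telescope_sumr_eq (fun t => - Phi t.-1)) // => [|t _]; last by rewrite opprK addrC.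
rewrite /Phi /= hx0 subrr sqnorm0 mulr0 oppr0 subr0 oppr_le0.
by rewrite mulr_ge0 ?sqnorm_ge0 // divr_ge0 // ltW.
Qed.
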